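(* Let $\mathbf{k}$ be an algebraically closed field with $\mathrm{char}(\mathbf{k})\neq 2$ and let $E=\bigwedge E_1$ be the exterior algebra of a $5$-dimensional $\mathbf{k}$-vector space $E_1$. Let $U\subseteq E_2$ be a $3$-dimensional subspace such that $\dim_{\mathbf{k}}(U\wedge E_1)\ge 7$. Then $U\subseteq\bigwedge^2W$ for some $3$-dimensional subspace $W\subseteq E_1$ if and only if $U^2=0$, i.e. $u\wedge u'=0$ for all $u,u'\in U$. *)

From HB Require Import structures.
From mathcomp Require Import all_boot all_order all_algebra.
Set Implicit Arguments. Unset Strict Implicit. Unset Printing Implicit Defensive.
Import Order.TTheory GRing.Theory Num.Theory.
Local Open Scope ring_scope.

(* The exterior algebra of K^n, with standard basis e_0,...,e_{n-1}:
   an element is the family of its coordinates on the basis monomials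
   e_S = e_{i1} /\ ... /\ e_{ip} (i1 < ... < ip), indexed by S : {set 'I_n}. *)
Definition ext (K : fieldType) (n : nat) := {ffun {set 'I_n} -> K^o}.

(* sign of e_A /\ e_B = sgn A B * e_(A u B) for disjoint A, B:
   (-1)^(number of inversions between A and B) *)
Definition ext_sgn (K : fieldType) n (A B : {set 'I_n}) : K :=
  (-1) ^+ #|[set p : 'I_n * 'I_n | [&& p.1 \in A, p.2 \in B & (p.2 < p.1)%N]]|.

Definition wedge (K : fieldType) n (a b : ext K n) : ext K n :=
  [ffun S : {set 'I_n} =>
     \sum_(A : {set 'I_n} | A \subset S)
        ext_sgn K A (S :\: A) * a A * b (S :\: A)].

Definition emon (K : fieldType) n (S : {set 'I_n}) : ext K n :=
  [ffun T => (T == S)%:R].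

Definition grade (K : fieldType) n (p : nat) : {vspace ext K n} :=
  <<[seq emon K X | X <- enum [set X : {set 'I_n} | #|X| == p]]>>%VS.

(* U /\ V := span of all products u /\ v (u in U, v in V); by bilinearity of
   the wedge product, it is spanned by the products of basis vectors. *)
Definition wedgeSp (K : fieldType) n (U V : {vspace ext K n}) : {vspace ext K n} :=
  <<[seq wedge u v | u <- (vbasis U : seq _), v <- (vbasis V : seq _)]>>%VS.

From HB Require Import structures.
From mathcomp Require Import all_boot all_order all_algebra.
From mathcomp Require Import ring zify.
Set Implicit Arguments. Unset Strict Implicit. Unset Printing Implicit Defensive.
Import Order.TTheory GRing.Theory Num.Theory.
Local Open Scope ring_scope.

(* One direction holds because /\^4 W = 0 when dim W = 3. Conversely, assume
   U^2 = 0. Every u in U then has u /\ u = 0 and is decomposable, u = a /\ b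
   (this uses char K <> 2), so U has a basis a_i /\ b_i, i < 3, and the relations
   (a_i /\ b_i) /\ (a_j /\ b_j) = 0 say that any two of the planes
   P_i = <a_i, b_i> span at most a 3-space. Either P_2 lies in the 3-space
   W = P_0 + P_1, and then U <= /\^2 W, or the three planes share a line <v>.
   In the latter case U = v /\ <c_0, c_1, c_2>, and if d completes c_0, c_1,
   c_2, v to a basis of E_1, then U /\ E_1 is spanned by the six products
   v /\ c_i /\ c_j and v /\ c_i /\ d, contradicting dim (U /\ E_1) >= 7. *)

Section VectorSpaces.
Variables (K : fieldType) (vT : vectType K).
Implicit Types (U V : {vspace vT}) (X : seq vT).

Lemma span_ind X (P : vT -> Prop) :
  P 0 -> (forall a b, P a -> P b -> P (a + b)) -> (forall t a, P a -> P (t *: a)) ->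
  {in X, forall x, P x} -> forall v, v \in <<X>>%VS -> P v.
Proof.
move=> P0 PD PZ PX v /(coord_span (X := in_tuple X)) ->.
by apply: (big_ind P P0 PD) => i _; apply/PZ/PX/mem_nth.
Qed.

Lemma memv_span2P (a b z : vT) :
  reflect (exists k l : K, z = k *: a + l *: b) (z \in <<[:: a; b]>>%VS).
Proof.
rewrite span_cons span_seq1; apply: (iffP memv_addP) => [|[k [l ->]]].
  by case=> _ /vlineP[k ->] [_ /vlineP[l ->] ->]; exists k, l.
by exists (k *: a); rewrite ?memvZ ?memv_line //; exists (l *: b); rewrite ?memvZ ?memv_line.
Qed.

Lemma dimv3_basis U : \dim U = 3%N ->
  exists u0 u1 u2, U = <<[:: u0; u1; u2]>>%VS /\ free [:: u0; u1; u2].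
Proof.
move=> dimU; have size_basis : size (vbasis U) = 3%N by rewrite size_tuple dimU.
move: (vbasisP U) size_basis; case: (tval (vbasis U)) => [|u0 [|u1 [|u2 [|]]]] // Ubasis _.
by exists u0, u1, u2; rewrite (span_basis Ubasis) (basis_free Ubasis).
Qed.

Lemma planes_common_vector (P0 P1 P2 : {vspace vT}) :
  \dim P0 = 2%N -> \dim P1 = 2%N -> \dim P2 = 2%N ->
  (\dim (P0 + P2) <= 3)%N -> (\dim (P1 + P2) <= 3)%N -> ~~ (P2 <= P0 + P1)%VS ->
  exists2 v, v != 0 & [/\ v \in P0, v \in P1 & v \in P2].
Proof.
move=> dimP0 dimP1 dimP2 dimP02 dimP12 P2_notin; set Q := (P0 + P1)%VS.
(* Q :&: P2 is at most a line, and it contains the nonzero spaces P0 :&: P2 and P1 :&: P2. *)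
have dimQP2 : (\dim (Q :&: P2) <= 1)%N.
  have : (\dim Q < \dim (Q + P2))%N.
    rewrite (ltn_leqif (dimv_leqif_eq (addvSl Q P2))).
    by apply: contra P2_notin => /eqP QP2; rewrite -/Q QP2 addvSr.
  have := dimv_sum_cap Q P2; lia.
have capP2 (P : {vspace vT}) : (P <= Q)%VS -> \dim P = 2%N -> (\dim (P + P2) <= 3)%N ->
    (P :&: P2 = Q :&: P2)%VS.
  move=> PQ dimP dimPP2; apply/eqP; rewrite eqEdim capvS //=.
  by have := dimv_sum_cap P P2; lia.
have capP02 := capP2 _ (addvSl P0 P1) dimP0 dimP02.
have capP12 := capP2 _ (addvSr P0 P1) dimP1 dimP12.
set v := vpick (Q :&: P2); have vQP2 : v \in (Q :&: P2)%VS by apply: memv_pick.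
exists v; first by rewrite vpick0 -dimv_eq0 -capP02 -lt0n; have := dimv_sum_cap P0 P2; lia.
have /memv_capP[vP0 vP2] : v \in (P0 :&: P2)%VS by rewrite capP02.
by have /memv_capP[vP1 _] : v \in (P1 :&: P2)%VS by rewrite capP12.
Qed.

Lemma extend_by_vector V X : {subset X <= V} -> (\dim V <= (\dim <<X>>).+1)%N ->
  exists2 d, d \in V & (V <= <<d :: X>>)%VS.
Proof.
move=> XV dimV; have [VX | /subvPn[d dV dX]] := boolP (V <= <<X>>)%VS.
  by exists 0; rewrite ?mem0v // (subv_trans VX) // span_cons addvSr.
exists d => //; have XdX : (<<X>> <= <<d :: X>>)%VS by rewrite span_cons addvSr.
have dX_sub : (<<d :: X>> <= V)%VS.
  by apply/span_subvP => x; rewrite inE => /predU1P[-> | /XV].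
suff /eqP -> : (<<d :: X>> == V)%VS by [].
rewrite eqEdim dX_sub (leq_trans dimV) // (ltn_leqif (dimv_leqif_eq XdX)).
by apply: contraNneq dX => ->; apply: memv_span; rewrite mem_head.
Qed.

End VectorSpaces.

Section Exterior.
Variables (K : fieldType) (n : nat).
Local Notation E := (ext K n).
Local Notation sgn := (@ext_sgn K n).
Local Notation e := (emon K).
Implicit Types (a b c w x y : E) (A B C S T : {set 'I_n}) (i j k : 'I_n).

Lemma extD a b S : (a + b) S = a S + b S. Proof. by rewrite ffunE. Qed.
Lemma extZ (t : K) a S : (t *: a) S = t * a S. Proof. by rewrite ffunE. Qed.
Lemma extN a S : (- a) S = - a S. Proof. by rewrite ffunE. Qed.
Lemma ext0 S : (0 : E) S = 0. Proof. by rewrite ffunE. Qed.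
Lemma emonE A S : e A S = (S == A)%:R. Proof. by rewrite ffunE. Qed.

Lemma ext_sum_emon a : a = \sum_A a A *: e A.
Proof.
apply/ffunP => S; rewrite sum_ffunE (bigD1 S) //= big1 ?addr0.
  by rewrite extZ emonE eqxx mulr1.
by move=> A hA; rewrite extZ emonE eq_sym (negbTE hA) mulr0.
Qed.

Lemma ext_sgnUr A B C : [disjoint B & C] -> sgn A (B :|: C) = sgn A B * sgn A C.
Proof.
move=> dBC; rewrite /ext_sgn -exprD -cardsUI.
set X := (X in #|X :&: _|); set Y := (Y in #|_ :&: Y|).
have -> : X :&: Y = set0.
  apply/setP => -[p q]; rewrite !inE /=.
  by case: (boolP (q \in B)) => hq; rewrite ?(disjointFr dBC hq) ?andbF.
rewrite cards0 addn0; congr (_ ^+ _); apply: eq_card => -[p q]; rewrite !inE /=.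
by case: (p \in A); case: (q \in B); case: (q \in C); case: (q < p)%N.
Qed.

Lemma ext_sgnUl A B C : [disjoint A & B] -> sgn (A :|: B) C = sgn A C * sgn B C.
Proof.
move=> dAB; rewrite /ext_sgn -exprD -cardsUI.
set X := (X in #|X :&: _|); set Y := (Y in #|_ :&: Y|).
have -> : X :&: Y = set0.
  apply/setP => -[p q]; rewrite !inE /=.
  by case: (boolP (p \in A)) => hp; rewrite ?(disjointFr dAB hp) ?andbF.
rewrite cards0 addn0; congr (_ ^+ _); apply: eq_card => -[p q]; rewrite !inE /=.
by case: (p \in A); case: (p \in B); case: (q \in C); case: (q < p)%N.
Qed.

Lemma ext_sgn11 i j : sgn [set i] [set j] = (-1) ^+ (j < i)%N.
Proof.
rewrite /ext_sgn; congr (_ ^+ _); case: ltnP => h.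
  rewrite /= -(cards1 (i, j)); apply: eq_card => -[p q]; rewrite !inE /= xpair_eqE.
  by case: eqP => [->|]; case: eqP => [->|] //=; rewrite h.
apply/eqP; rewrite cards_eq0; apply/eqP/setP => -[p q]; rewrite !inE /=.
by case: eqP => [->|]; case: eqP => [->|] //=; rewrite ltnNge h.
Qed.

Lemma ext_sgn11C i j : i != j -> sgn [set i] [set j] * sgn [set j] [set i] = -1.
Proof.
move=> hij; rewrite !ext_sgn11.
by case: ltngtP => h; rewrite ?expr0 ?expr1 ?mulN1r ?mul1r //; move: hij; rewrite (ord_inj h) eqxx.
Qed.

Lemma ext_sgnK A B : sgn A B * sgn A B = 1.
Proof. by rewrite /ext_sgn -exprD -signr_odd oddD addbb. Qed.

Lemma ext_sgn_neq0 A B : sgn A B != 0.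
Proof. by rewrite /ext_sgn expf_neq0 // oppr_eq0 oner_eq0. Qed.

Lemma ext_sgn0r A : sgn A set0 = 1.
Proof.
rewrite /ext_sgn -[RHS](expr0 (-1 : K)); congr (_ ^+ _); apply/eqP.
by rewrite cards_eq0; apply/eqP/setP => -[p q]; rewrite !inE andbF.
Qed.

Lemma wedgeDl a1 a2 b : wedge (a1 + a2) b = wedge a1 b + wedge a2 b.
Proof.
apply/ffunP => S; rewrite !ffunE -big_split /=; apply: eq_bigr => A _.
by rewrite extD; ring.
Qed.

Lemma wedgeDr a b1 b2 : wedge a (b1 + b2) = wedge a b1 + wedge a b2.
Proof.
apply/ffunP => S; rewrite !ffunE -big_split /=; apply: eq_bigr => A _.
by rewrite extD; ring.
Qed.

Lemma wedgeZl t a b : wedge (t *: a) b = t *: wedge a b.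
Proof.
apply/ffunP => S; rewrite extZ !ffunE mulr_sumr; apply: eq_bigr => A _.
by rewrite extZ; ring.
Qed.

Lemma wedgeZr t a b : wedge a (t *: b) = t *: wedge a b.
Proof.
apply/ffunP => S; rewrite extZ !ffunE mulr_sumr; apply: eq_bigr => A _.
by rewrite extZ; ring.
Qed.

Lemma wedge0l b : wedge 0 b = 0.
Proof. by have := wedgeZl 0 0 b; rewrite !scale0r. Qed.

Lemma wedge0r a : wedge a 0 = 0.
Proof. by have := wedgeZr 0 a 0; rewrite !scale0r. Qed.

Lemma wedgeNl a b : wedge (- a) b = - wedge a b.
Proof. by rewrite -(scaleN1r a) wedgeZl scaleN1r. Qed.

Lemma wedgeNr a b : wedge a (- b) = - wedge a b.
Proof. by rewrite -(scaleN1r b) wedgeZr scaleN1r. Qed.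

Lemma wedge_suml I r (P : pred I) (F : I -> E) b :
  wedge (\sum_(i <- r | P i) F i) b = \sum_(i <- r | P i) wedge (F i) b.
Proof. exact: (big_morph (fun a => wedge a b) (fun x y => wedgeDl x y b) (wedge0l b)). Qed.

Lemma wedge_sumr I r (P : pred I) (F : I -> E) a :
  wedge a (\sum_(i <- r | P i) F i) = \sum_(i <- r | P i) wedge a (F i).
Proof. exact: (big_morph (wedge a) (wedgeDr a) (wedge0r a)). Qed.

Lemma wedge_emon A B :
  wedge (e A) (e B) = if [disjoint A & B] then sgn A B *: e (A :|: B) else 0.
Proof.
apply/ffunP => S; rewrite ffunE.
case: (boolP (A \subset S)) => hAS; last first.
  rewrite big1 => [|C hC]; last first.
    rewrite emonE; case: eqP => [hCA|]; rewrite ?mulr0 ?mul0r //.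
    by move: hC; rewrite hCA (negbTE hAS).
  case: ifP => _; rewrite ?ext0 // extZ emonE.
  by case: eqP => [hS|]; rewrite ?mulr0 //; move: hAS; rewrite hS subsetUl.
rewrite (bigD1 A) //= big1 ?addr0 => [|C /andP[_ hC]]; last first.
  by rewrite emonE (negbTE hC) mulr0 mul0r.
rewrite !emonE eqxx mulr1; case: eqP => [hSB | hSB].
  have dAB : [disjoint A & B] by rewrite -hSB disjoint_sym disjoints_subset subsetDr.
  have eS : A :|: S :\: A = S by rewrite -[RHS](setID S A) (setIidPr hAS).
  by rewrite dAB extZ emonE -hSB eS eqxx !mulr1.
case: ifP => dAB; rewrite ?ext0 ?mulr0 // extZ emonE.
case: eqP => [hS|]; rewrite ?mulr0 //; case: hSB.
by rewrite hS setDUl setDv set0U; apply/setDidPl; rewrite disjoint_sym.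
Qed.

Lemma wedge1r w : wedge w (e set0) = w.
Proof.
rewrite {1}(ext_sum_emon w) wedge_suml [RHS]ext_sum_emon; apply: eq_bigr => A _.
by rewrite wedgeZl wedge_emon -setI_eq0 setI0 eqxx ext_sgn0r scale1r setU0.
Qed.

Lemma wedgeA_emon A B C : wedge (wedge (e A) (e B)) (e C) = wedge (e A) (wedge (e B) (e C)).
Proof.
have dUl (X Y Z : {set 'I_n}) : [disjoint X :|: Y & Z] = [disjoint X & Z] && [disjoint Y & Z].
  by rewrite -!setI_eq0 setIUl setU_eq0.
have dUr (X Y Z : {set 'I_n}) : [disjoint X & Y :|: Z] = [disjoint X & Y] && [disjoint X & Z].
  by rewrite -!setI_eq0 setIUr setU_eq0.
rewrite !wedge_emon.
case dAB : [disjoint A & B]; case dBC : [disjoint B & C]; case dAC : [disjoint A & C];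
  rewrite ?wedge0l ?wedge0r ?wedgeZl ?wedgeZr ?wedge_emon ?dUl ?dUr ?dAB ?dBC ?dAC /= ?scaler0 //.
by rewrite !scalerA setUA ext_sgnUl // ext_sgnUr // mulrA [_ * sgn B C]mulrC mulrA.
Qed.

Lemma wedgeA a b c : wedge (wedge a b) c = wedge a (wedge b c).
Proof.
have wedgeA_emon2 A B c' : wedge (wedge (e A) (e B)) c' = wedge (e A) (wedge (e B) c').
  rewrite (ext_sum_emon c') !wedge_sumr; apply: eq_bigr => C _.
  by rewrite !wedgeZr wedgeA_emon.
have wedgeA_emon1 A b' c' : wedge (wedge (e A) b') c' = wedge (e A) (wedge b' c').
  rewrite (ext_sum_emon b') wedge_sumr !wedge_suml wedge_sumr; apply: eq_bigr => B _.
  by rewrite wedgeZr !wedgeZl wedgeZr wedgeA_emon2.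
rewrite (ext_sum_emon a) !wedge_suml; apply: eq_bigr => A _.
by rewrite !wedgeZl wedgeA_emon1.
Qed.

Definition homog p w := forall S, #|S| != p -> w S = 0.

Lemma homog0 p : homog p 0.
Proof. by move=> S _; rewrite ext0. Qed.

Lemma homog_emon A : homog #|A| (e A).
Proof. by move=> S; rewrite emonE; have [-> | _] := eqVneq S A; rewrite ?eqxx. Qed.

Lemma gradeP p w : reflect (homog p w) (w \in grade K n p).
Proof.
apply: (iffP idP) => [|hw].
  apply: span_ind => [|a b ha hb S hS | t a ha S hS | x /mapP[X]]; first exact: homog0.
  - by rewrite extD ha ?hb ?addr0.
  - by rewrite extZ ha ?mulr0.
  by rewrite mem_enum inE => /eqP <- ->; apply: homog_emon.
rewrite (ext_sum_emon w); apply: memv_suml => A _.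
have [hA | hA] := eqVneq #|A| p; last by rewrite hw // scale0r mem0v.
by apply/memvZ/memv_span/mapP; exists A; rewrite ?mem_enum ?inE ?hA.
Qed.

Lemma homog_emon1 k : homog 1 (e [set k]).
Proof. by have := homog_emon (A := [set k]); rewrite cards1. Qed.

Lemma homog1_sum_emon x : homog 1 x -> x = \sum_i x [set i] *: e [set i].
Proof.
move=> hx; apply/ffunP => T; rewrite sum_ffunE.
have [/eqP/cards1P[i ->] | hT] := eqVneq #|T| 1%N.
  rewrite (bigD1 i) //= big1 ?addr0 => [|j hji]; first by rewrite extZ emonE eqxx mulr1.
  by rewrite extZ emonE (inj_eq set1_inj) eq_sym (negbTE hji) mulr0.
rewrite hx // big1 // => j _; rewrite extZ emonE.
have [hTj | _] := eqVneq T [set j]; last by rewrite mulr0.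
by rewrite hTj cards1 eqxx in hT.
Qed.

Lemma wedge_emon11C i j : wedge (e [set i]) (e [set j]) = - wedge (e [set j]) (e [set i]).
Proof.
rewrite !wedge_emon !disjoints1 !inE eq_sym.
have [<-|hij] := eqVneq i j; first by rewrite oppr0.
rewrite /= setUC -scaleNr; congr (_ *: _).
by rewrite -[LHS]mulr1 -(ext_sgnK [set j] [set i]) mulrA ext_sgn11C // mulN1r.
Qed.

Lemma wedge_anticomm x y : homog 1 x -> homog 1 y -> wedge x y = - wedge y x.
Proof.
move=> /homog1_sum_emon-> /homog1_sum_emon->.
rewrite wedge_suml [wedge (\sum_i _) _]wedge_suml.
under eq_bigr do rewrite wedge_sumr.
under [in RHS]eq_bigr do rewrite wedge_sumr.
rewrite exchange_big -sumrN; apply: eq_bigr => i _; rewrite -sumrN; apply: eq_bigr => j _.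
by rewrite !wedgeZl !wedgeZr !scalerA wedge_emon11C scalerN mulrC.
Qed.

(* The interior product by the linear form e_i |-> f i on E_1. *)
Definition contract (f : 'I_n -> K) w : E :=
  [ffun S : {set 'I_n} => \sum_(i | i \notin S) f i * sgn [set i] S * w (i |: S)].

Definition pairing (f : 'I_n -> K) x : K := \sum_i f i * x [set i].

Fact contract_is_linear f : linear (contract f).
Proof.
move=> t a b; apply/ffunP => S; rewrite extD extZ !ffunE mulr_sumr -big_split /=.
by apply: eq_bigr => i _; rewrite extD extZ; ring.
Qed.

HB.instance Definition _ f :=
  GRing.isLinear.Build K E E *:%R (contract f) (contract_is_linear f).

Lemma homog_contract f p w : homog p.+1 w -> homog p (contract f w).
Proof.
move=> hw S hS; rewrite ffunE big1 // => i hi.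
by rewrite hw ?mulr0 // cardsU1 hi.
Qed.

Lemma wedge_emon1E k w T :
  wedge (e [set k]) w T = if k \in T then sgn [set k] (T :\ k) * w (T :\ k) else 0.
Proof.
rewrite ffunE; case: ifP => hk.
  rewrite (bigD1 [set k]) ?sub1set //= big1 ?addr0 => [|A /andP[_ hA]].
    by rewrite emonE eqxx mulr1.
  by rewrite emonE (negbTE hA) mulr0 mul0r.
rewrite big1 // => A hA; rewrite emonE; have [hAk | _] := eqVneq A [set k].
  by move: hA; rewrite hAk sub1set hk.
by rewrite mulr0 mul0r.
Qed.

Lemma ext_sgn_swap i k S : i \notin S -> k \in S ->
  sgn [set i] S * sgn [set k] (i |: S :\ k) = - (sgn [set k] (S :\ k) * sgn [set i] (S :\ k)).
Proof.
move=> hi hk; have hik : i != k by apply: contraNneq hi => ->.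
rewrite -{1}(setD1K hk) ext_sgnUr ?disjoints1 ?setD11 // ext_sgnUr; last first.
  by rewrite disjoints1 !inE (negbTE hi) andbF.
by rewrite mulrACA ext_sgn11C // mulN1r mulrC.
Qed.

Lemma contract_wedge_emon1 f k w :
  contract f (wedge (e [set k]) w) = f k *: w - wedge (e [set k]) (contract f w).
Proof.
apply/ffunP => S; rewrite extD extN extZ wedge_emon1E ffunE.
under eq_bigr do rewrite wedge_emon1E.
have [hk | hk] := boolP (k \in S); last first.
  rewrite (bigD1 k) //= big1 => [|i /andP[hi hik]].
    by rewrite setU11 setU1K // addr0 subr0 mulrA -(mulrA (f k)) ext_sgnK mulr1.
  by rewrite !inE (negbTE hk) eq_sym (negbTE hik) mulr0.
rewrite [contract f w _]ffunE [in RHS](bigD1 k) ?setD11 //= setD1K // mulrDr opprD addrA.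
set s := sgn [set k] (S :\ k); have -> : s * (f k * s * w S) = s * s * (f k * w S) by ring.
rewrite ext_sgnK mul1r subrr add0r mulr_sumr -sumrN.
apply: eq_big => [i | i hi].
  by rewrite !inE; have [->|_] := eqVneq i k; rewrite ?hk ?andbF ?andbT.
have hik : i != k by apply: contraNneq hi => ->.
have -> : (i |: S) :\ k = i |: S :\ k.
  by apply/setP => t; rewrite !inE; case: eqP => // ->; rewrite eq_sym (negbTE hik).
by rewrite !inE hk orbT mulrA -(mulrA (f i)) ext_sgn_swap // {}/s; ring.
Qed.

Lemma contract_wedge1 f x w : homog 1 x ->
  contract f (wedge x w) = pairing f x *: w - wedge x (contract f w).
Proof.
move=> /homog1_sum_emon {1 3}->; rewrite wedge_suml linear_sum /= wedge_suml.
rewrite /pairing scaler_suml -sumrB; apply: eq_bigr => k _.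
by rewrite wedgeZl linearZ /= contract_wedge_emon1 scalerBr scalerA wedgeZl mulrC.
Qed.

Lemma contract_emon0 f : contract f (e set0) = 0.
Proof.
apply/ffunP => S; rewrite !ffunE big1 // => i _; rewrite emonE.
have /negbTE -> : i |: S != set0 by apply/set0Pn; exists i; rewrite setU11.
by rewrite mulr0.
Qed.

Lemma contract1 f x : homog 1 x -> contract f x = pairing f x *: e set0.
Proof.
move=> hx; have := contract_wedge1 f (e set0) hx.
by rewrite wedge1r contract_emon0 wedge0r subr0.
Qed.

Lemma contract_wedge11 f x y w : homog 1 x -> homog 1 y ->
  contract f (wedge (wedge x y) w) =
    wedge (contract f (wedge x y)) w + wedge (wedge x y) (contract f w).
Proof.
move=> hx hy; rewrite wedgeA !contract_wedge1 // (contract1 f hy).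
by rewrite wedgeDr wedgeNr !wedgeZr wedge1r wedgeDl wedgeNl !wedgeZl wedgeA opprD opprK addrA.
Qed.

Lemma homog2_ind (F G : E -> E) : linear F -> linear G ->
  (forall x y, homog 1 x -> homog 1 y -> F (wedge x y) = G (wedge x y)) ->
  {in grade K n 2, F =1 G}.
Proof.
have linear0 (H : E -> E) : linear H -> H 0 = 0.
  by move=> linH; have := linH 1 0 0; rewrite !scale1r addr0 -{1}[H 0]addr0 => /addrI.
have linearZ0 (H : E -> E) t a : linear H -> H (t *: a) = t *: H a.
  by move=> linH; have := linH t a 0; rewrite addr0 (linear0 _ linH) addr0.
move=> linF linG FG.
apply: (@span_ind _ _ _ (fun u => F u = G u)) => [|a b Fa Fb | t a Fa | x].
- by rewrite !linear0.
- by have := linF 1 a b; have := linG 1 a b; rewrite !scale1r => -> ->; rewrite Fa Fb.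
- by rewrite !linearZ0 // Fa.
case/mapP => X; rewrite mem_enum inE => /cards2P[i [j [hij ->]]] ->.
have -> : e [set i; j] = sgn [set i] [set j] *: wedge (e [set i]) (e [set j]).
  by rewrite wedge_emon disjoints1 inE hij scalerA ext_sgnK scale1r.
by rewrite !linearZ0 // FG //; apply: homog_emon1.
Qed.

Lemma contract_wedge_homog2 f u w : u \in grade K n 2 ->
  contract f (wedge u w) = wedge (contract f u) w + wedge u (contract f w).
Proof.
move: u; apply: homog2_ind => [t a b | t a b | x y hx hy]; last exact: contract_wedge11.
  by rewrite wedgeDl wedgeZl linearP.
by rewrite linearP !wedgeDl !wedgeZl scalerDr addrACA.
Qed.

Lemma wedge_homog2C u a : u \in grade K n 2 -> homog 1 a -> wedge u a = wedge a u.
Proof.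
move=> hu ha; move: u hu; apply: homog2_ind => [t b c | t b c | x y hx hy].
- by rewrite wedgeDl wedgeZl.
- by rewrite wedgeDr wedgeZr.
rewrite wedgeA (wedge_anticomm hy ha) wedgeNr -wedgeA (wedge_anticomm hx ha).
by rewrite wedgeNl opprK wedgeA.
Qed.

Lemma contract_wedge_sqr f u : u \in grade K n 2 ->
  contract f (wedge u u) = 2%:R *: wedge (contract f u) u.
Proof.
move=> hu; rewrite contract_wedge_homog2 // -wedge_homog2C //.
  by rewrite scaler_nat mulr2n.
by apply: homog_contract; apply/gradeP.
Qed.

Lemma contract_neq0 p w : homog p.+1 w -> w != 0 -> exists f, contract f w != 0.
Proof.
move=> hw w_neq0; have [S wS] : exists S, w S != 0.
  apply/existsP; apply: contraR w_neq0 => /existsPn wS0.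
  by apply/eqP/ffunP => S; rewrite ext0; apply/eqP/negPn.
have /card_gt0P[i iS] : (0 < #|S|)%N.
  by apply: contraR wS; rewrite -eqn0Ngt => /eqP S0; rewrite hw ?S0.
exists (fun k => (k == i)%:R); apply/eqP => /ffunP/(_ (S :\ i)).
rewrite !ffunE (bigD1 i) ?setD11 //= big1 => [|k /andP[_ /negbTE->]]; last by rewrite !mul0r.
rewrite eqxx mul1r setD1K // addr0 => /eqP; rewrite mulf_eq0 (negbTE wS) orbF.
exact/negP/ext_sgn_neq0.
Qed.

Lemma pairing_eq1 x : homog 1 x -> x != 0 -> exists g, pairing g x = 1.
Proof.
move=> hx x_neq0; have [f] := contract_neq0 hx x_neq0.
rewrite contract1 // scaler_eq0 negb_or => /andP[fx_neq0 _].
exists (fun k => f k / pairing f x); rewrite /pairing.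
by under eq_bigr do rewrite mulrAC; rewrite -mulr_suml mulfV.
Qed.

Lemma pairing_coord m (X : m.-tuple E) (j : 'I_m) y : homog 1 y ->
  pairing (fun i => coord X j (e [set i])) y = coord X j y.
Proof.
move=> /homog1_sum_emon {2}->; rewrite linear_sum; apply: eq_bigr => i _.
by rewrite linearZ /= mulrC.
Qed.

Definition wedge_seq (s : seq E) : E := foldr (@wedge K n) (e set0) s.

Lemma contract_wedge_seq f s : {in s, forall x, homog 1 x} ->
  {in s, forall x, pairing f x = 0} -> contract f (wedge_seq s) = 0.
Proof.
elim: s => [|x s IHs] hs fs /=; first exact: contract_emon0.
rewrite (contract_wedge1 _ _ (hs x (mem_head _ _))) (fs x (mem_head _ _)) scale0r.
rewrite IHs ?wedge0r ?subr0 //.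
  by move=> y ys; apply: hs; rewrite inE ys orbT.
by move=> y ys; apply: fs; rewrite inE ys orbT.
Qed.

Lemma emon0_neq0 : (e set0 : E) != 0.
Proof.
by apply/eqP => /ffunP/(_ set0); rewrite emonE ext0 eqxx => /eqP; rewrite oner_eq0.
Qed.

Lemma wedge_seq_neq0 s : {in s, forall x, homog 1 x} -> free s -> wedge_seq s != 0.
Proof.
elim: s => [|x s IHs] hs xs_free; first exact: emon0_neq0.
have hx : homog 1 x by apply: hs; rewrite mem_head.
have hs' : {in s, forall y, homog 1 y} by move=> y ys; apply: hs; rewrite inE ys orbT.
have s_free : free s by move: xs_free; rewrite free_cons => /andP[].
have X_free : free (in_tuple (x :: s)) := xs_free.
pose f i := coord (in_tuple (x :: s)) ord0 (e [set i]).
have fx : pairing f x = 1.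
  by rewrite pairing_coord // (coord_free ord0 ord0 X_free).
have fs : {in s, forall y, pairing f y = 0}.
  move=> y /(nthP 0)[k ks <-]; rewrite pairing_coord; last exact/hs'/mem_nth.
  exact: (coord_free (lift ord0 (Ordinal ks)) ord0 X_free).
apply: contra (IHs hs' s_free) => /= /eqP xs0.
have := contract_wedge1 f (wedge_seq s) hx.
by rewrite xs0 linear0 fx scale1r contract_wedge_seq // wedge0r subr0 => <-.
Qed.

Hypothesis two_neq0 : 2%:R != 0 :> K.

Lemma wedgexx x : homog 1 x -> wedge x x = 0.
Proof.
move=> hx; have /eqP : wedge x x *+ 2 = 0 by rewrite mulr2n {1}wedge_anticomm // addNr.
by rewrite -scaler_nat scaler_eq0 (negbTE two_neq0) => /eqP.
Qed.

Lemma grade2_decomposable u : u \in grade K n 2 -> wedge u u = 0 ->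
  exists a b, [/\ a \in grade K n 1, b \in grade K n 1 & u = wedge a b].
Proof.
move=> hu uu0; have [-> | u_neq0] := eqVneq u 0.
  by exists 0, 0; rewrite wedge0l mem0v.
have hu2 : homog 2 u by apply/gradeP.
(* contract f (u /\ u) = 2 (a /\ u) for a := contract f u, and then
   u = a /\ contract g u as soon as g(a) = 1. *)
have [f] := contract_neq0 hu2 u_neq0; set a := contract f u => a_neq0.
have ha : homog 1 a := homog_contract f hu2.
have au0 : wedge a u = 0.
  apply/eqP; have := contract_wedge_sqr f hu; rewrite uu0 linear0 => /esym/eqP.
  by rewrite scaler_eq0 (negbTE two_neq0).
have [g ga] := pairing_eq1 ha a_neq0.
exists a, (contract g u); split; try apply/gradeP; [done | exact: homog_contract |].
by have := contract_wedge1 g u ha; rewrite au0 linear0 ga scale1r => /esym/subr0_eq.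
Qed.

End Exterior.

Section ExteriorSubspaces.
Variables (K : fieldType) (n : nat).
Hypothesis two_neq0 : 2%:R != 0 :> K.
Local Notation E := (ext K n).
Local Notation E1 := (grade K n 1).
Implicit Types (a b c d v w x y z : E) (U V W Z : {vspace E}) (X : seq E).

Lemma memv_wedge_spanl w X Z : {in X, forall x, wedge x w \in Z} ->
  forall z, z \in <<X>>%VS -> wedge z w \in Z.
Proof.
move=> XZ; apply: span_ind => // [|a b aZ bZ | t a aZ]; first by rewrite wedge0l mem0v.
  by rewrite wedgeDl memvD.
by rewrite wedgeZl memvZ.
Qed.

Lemma memv_wedge_spanr w X Z : {in X, forall x, wedge w x \in Z} ->
  forall z, z \in <<X>>%VS -> wedge w z \in Z.
Proof.
move=> XZ; apply: span_ind => // [|a b aZ bZ | t a aZ]; first by rewrite wedge0r mem0v.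
  by rewrite wedgeDr memvD.
by rewrite wedgeZr memvZ.
Qed.

Lemma memv_wedgeSp U V x y : x \in U -> y \in V -> wedge x y \in wedgeSp U V.
Proof.
rewrite -{1}(span_basis (vbasisP U)) -{1}(span_basis (vbasisP V)) => xU yV.
move: x xU; apply: memv_wedge_spanl => x xU; move: y yV; apply: memv_wedge_spanr => y yV.
by apply/memv_span/allpairs_f.
Qed.

Lemma wedgeSp_subv U V Z :
  {in U & V, forall x y, wedge x y \in Z} -> (wedgeSp U V <= Z)%VS.
Proof.
move=> UVZ; apply/span_subvP => _ /allpairsP[[x y] [/= xU yV ->]].
by apply: UVZ; apply: vbasis_mem.
Qed.

Lemma wedge_not_uniq x y z t :
  {subset [:: x; y; z; t] <= E1} -> ~~ uniq [:: x; y; z; t] ->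
  wedge (wedge x y) (wedge z t) = 0.
Proof.
move=> xyzt_E1; have [hy hz ht] : [/\ homog 1 y, homog 1 z & homog 1 t].
  by split; apply/gradeP/xyzt_E1; rewrite !inE eqxx ?orbT.
have wedge_aa a w : homog 1 a -> wedge a (wedge a w) = 0.
  by move=> ha; rewrite -wedgeA wedgexx // wedge0l.
have wedge_swap a b w : homog 1 a -> homog 1 b -> wedge a (wedge b w) = - wedge b (wedge a w).
  by move=> ha hb; rewrite -!wedgeA (wedge_anticomm ha hb) wedgeNl.
rewrite !wedgeA /= !inE !negb_and !negbK orbF -!orbA.
case/or4P => [/eqP-> | /eqP-> | /eqP-> | /or3P[/eqP-> | /eqP-> | /eqP->]].
- by rewrite wedge_aa.
- by rewrite wedge_swap // wedge_aa // wedge0r oppr0.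
- by rewrite (wedge_anticomm hz ht) !wedgeNr wedge_swap // wedge_aa // wedge0r !oppr0.
- by rewrite wedge_aa // wedge0r.
- by rewrite (wedge_anticomm hz ht) !wedgeNr wedge_aa // wedge0r oppr0.
by rewrite wedgexx // !wedge0r.
Qed.

Lemma wedgeSp_dim3_wedge0 W : (W <= E1)%VS -> \dim W = 3%N ->
  {in wedgeSp W W &, forall u u', wedge u u' = 0}.
Proof.
move=> WE1 dimW u u' uW u'W; apply/eqP; rewrite -memv0.
move: u uW; apply: memv_wedge_spanl => _ /allpairsP[[x y] [/= xW yW ->]].
move: u' u'W; apply: memv_wedge_spanr => _ /allpairsP[[z t] [/= zW tW ->]].
have xyztW : {subset [:: x; y; z; t] <= vbasis W}.
  by move=> a; rewrite !inE => /or4P[] /eqP->.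
rewrite wedge_not_uniq ?mem0v // => [a /xyztW /vbasis_mem /(subvP WE1) // |].
have sizeW : size (vbasis W) = 3%N by rewrite size_tuple dimW.
by apply/negP => /uniq_leq_size/(_ xyztW); rewrite sizeW.
Qed.

Lemma dim_grade p : (\dim (grade K n p) <= 'C(n, p))%N.
Proof.
by apply: leq_trans (dim_span _) _; rewrite size_map -cardE card_draws card_ord.
Qed.

Lemma free_wedge2 a b : b \in E1 -> wedge a b != 0 -> free [:: a; b].
Proof.
move=> /gradeP hb ab_neq0; rewrite free_cons seq1_free span_seq1; apply/andP; split.
  by apply: contra ab_neq0 => /vlineP[k ->]; rewrite wedgeZl wedgexx // scaler0.
by apply: contraNneq ab_neq0 => ->; rewrite wedge0r.
Qed.

Lemma wedge_plane_line a b x y : a \in E1 -> b \in E1 ->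
  x \in <<[:: a; b]>>%VS -> y \in <<[:: a; b]>>%VS -> wedge x y \in <[wedge a b]>%VS.
Proof.
move=> /gradeP ha /gradeP hb /memv_span2P[k [l ->]] /memv_span2P[k' [l' ->]].
rewrite !wedgeDl !wedgeDr !wedgeZl !wedgeZr !wedgexx // (wedge_anticomm hb ha).
by rewrite !scaler0 add0r addr0 memvD ?memvZ ?memvN ?memvZ ?memv_line.
Qed.

Lemma wedge_plane_factor a b v : a \in E1 -> b \in E1 ->
  v \in <<[:: a; b]>>%VS -> v != 0 -> exists2 c, c \in E1 & wedge a b = wedge v c.
Proof.
move=> aE1 bE1 /memv_span2P[k [l ->]] v_neq0; have [/gradeP ha /gradeP hb] := conj aE1 bE1.
have [k0 | k_neq0] := eqVneq k 0.
  have l_neq0 : l != 0 by apply: contraNneq v_neq0 => ->; rewrite k0 !scale0r addr0.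
  exists (- l^-1 *: a); first by rewrite memvZ.
  rewrite k0 scale0r add0r wedgeZl wedgeZr scalerA (wedge_anticomm hb ha) scalerN.
  by rewrite -scaleNr mulrN mulfV // opprK scale1r.
exists (k^-1 *: b); first by rewrite memvZ.
by rewrite wedgeDl !wedgeZl !wedgeZr wedgexx // !scaler0 addr0 scalerA mulfV // scale1r.
Qed.

Lemma span_wedge_seq0 X :
  {subset X <= E1} -> wedge_seq X = 0 -> (\dim <<X>> < size X)%N.
Proof.
move=> XE1 X0; rewrite ltn_neqAle dim_span andbT; apply: contra_eqN X0 => X_free.
by apply: wedge_seq_neq0 => // x /XE1/gradeP.
Qed.

Lemma dim_plane_add a b c d : a \in E1 -> b \in E1 -> c \in E1 -> d \in E1 ->
  wedge (wedge a b) (wedge c d) = 0 -> (\dim (<<[:: a; b]>> + <<[:: c; d]>>) <= 3)%N.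
Proof.
move=> aE1 bE1 cE1 dE1 abcd0; rewrite -span_cat.
apply: (@span_wedge_seq0 [:: a; b; c; d]).
  by move=> x; rewrite !inE => /or4P[] /eqP->.
by rewrite /wedge_seq /= wedge1r -wedgeA.
Qed.

Lemma free_rcons_wedge v X : v \in E1 -> v != 0 ->
  free [seq wedge v x | x <- X] -> free (rcons X v).
Proof.
move=> /gradeP hv v_neq0; elim: X => [|x X IHX]; first by rewrite /= seq1_free.
rewrite /= !free_cons => /andP[vx_notin vX_free]; rewrite IHX // andbT.
apply: contra vx_notin; apply: memv_wedge_spanr => y; rewrite mem_rcons inE.
case/predU1P => [-> | yX]; first by rewrite wedgexx // mem0v.
by apply: memv_span; apply: map_f.
Qed.

Lemma plane_subv a b : a \in E1 -> b \in E1 -> (<<[:: a; b]>> <= E1)%VS.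
Proof. by move=> aE1 bE1; apply/span_subvP => x; rewrite !inE => /orP[] /eqP->. Qed.

Lemma dim_plane a b : b \in E1 -> wedge a b != 0 -> \dim <<[:: a; b]>> = 2%N.
Proof. by move=> bE1 ab_neq0; apply/eqP/free_wedge2. Qed.

Lemma dim_plane_add_eq3 a0 b0 a1 b1 :
  a0 \in E1 -> b0 \in E1 -> a1 \in E1 -> b1 \in E1 ->
  wedge (wedge a0 b0) (wedge a1 b1) = 0 -> free [:: wedge a0 b0; wedge a1 b1] ->
  \dim (<<[:: a0; b0]>> + <<[:: a1; b1]>>) = 3%N.
Proof.
move=> a0E1 b0E1 a1E1 b1E1 u01.
rewrite free_cons span_seq1 seq1_free => /andP[u0_notin u1_neq0].
apply/eqP; rewrite eqn_leq dim_plane_add //= leqNgt; apply: contra u0_notin => dim_lt3.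
have P01_eq : (<<[:: a1; b1]>> == <<[:: a0; b0]>> + <<[:: a1; b1]>>)%VS.
  by rewrite eqEdim addvSr dim_plane // -ltnS.
have P0_sub : (<<[:: a0; b0]>> <= <<[:: a1; b1]>>)%VS by rewrite (eqP P01_eq) addvSl.
by apply: wedge_plane_line; rewrite // (subvP P0_sub) // memv_span // !inE eqxx ?orbT.
Qed.

End ExteriorSubspaces.

Section FiveDimensional.
Variable K : fieldType.
Hypothesis two_neq0 : 2%:R != 0 :> K.
Local Notation E := (ext K 5).
Local Notation E1 := (grade K 5 1).
Implicit Types (a b c d v x y : E).

Lemma dim_wedgeSp_common_factor v c0 c1 c2 : v \in E1 -> v != 0 ->
  {subset [:: c0; c1; c2] <= E1} -> free [:: wedge v c0; wedge v c1; wedge v c2] ->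
  (\dim (wedgeSp <<[:: wedge v c0; wedge v c1; wedge v c2]>> E1) <= 6)%N.
Proof.
move=> vE1 v_neq0 cE1 vc_free.
have cv_free : free [:: c0; c1; c2; v].
  exact: (@free_rcons_wedge _ _ two_neq0 v [:: c0; c1; c2]).
have [d dE1 E1_sub] : exists2 d, d \in E1 & (E1 <= <<[:: d; c0; c1; c2; v]>>)%VS.
  apply: extend_by_vector => [x | ].
    by rewrite !inE => /or4P[] /eqP-> //; apply: cE1; rewrite !inE eqxx ?orbT.
  by rewrite (eqP cv_free) (leq_trans (dim_grade _ _ _)) ?bin1.
have [/gradeP hv [/gradeP h0 /gradeP h1 /gradeP h2]] :
    v \in E1 /\ [/\ c0 \in E1, c1 \in E1 & c2 \in E1].
  by split=> //; split; apply: cE1; rewrite !inE eqxx ?orbT.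
have wedge_v_c c : homog 1 c -> wedge (wedge v c) c = 0.
  by move=> hc; rewrite wedgeA wedgexx // wedge0r.
have wedge_v_v c : homog 1 c -> wedge (wedge v c) v = 0.
  by move=> hc; rewrite wedgeA (wedge_anticomm hc hv) wedgeNr -wedgeA wedgexx // wedge0l oppr0.
have wedge_v_C c c' : homog 1 c -> homog 1 c' -> wedge (wedge v c) c' = - wedge (wedge v c') c.
  by move=> hc hc'; rewrite !wedgeA (wedge_anticomm hc hc') wedgeNr.
set Y := [:: wedge (wedge v c0) c1; wedge (wedge v c0) c2; wedge (wedge v c1) c2;
             wedge (wedge v c0) d; wedge (wedge v c1) d; wedge (wedge v c2) d].
apply: leq_trans (dim_span Y); apply/dimvS/wedgeSp_subv => x y xU /(subvP E1_sub) yS.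
move: x xU; apply: memv_wedge_spanl => x xU; move: y yS; apply: memv_wedge_spanr => y yS.
(* The products with v and c_i vanish, and those with c_j, i > j, are opposites of ones in Y. *)
move: xU yS; rewrite !inE => /or3P[] /eqP-> /or4P[/eqP-> | /eqP-> | /eqP-> | /orP[] /eqP->];
  rewrite ?wedge_v_c ?wedge_v_v ?mem0v //;
  by [ apply: memv_span; rewrite !inE eqxx ?orbT
     | rewrite wedge_v_C // memvN memv_span // !inE eqxx ?orbT ].
Qed.

Lemma decomposable_triple_common_space a0 b0 a1 b1 a2 b2 :
  a0 \in E1 -> b0 \in E1 -> a1 \in E1 -> b1 \in E1 -> a2 \in E1 -> b2 \in E1 ->
  let U := <<[:: wedge a0 b0; wedge a1 b1; wedge a2 b2]>>%VS in
  free [:: wedge a0 b0; wedge a1 b1; wedge a2 b2] ->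
  {in U &, forall u u', wedge u u' = 0} -> (7 <= \dim (wedgeSp U E1))%N ->
  exists W, [/\ (W <= E1)%VS, \dim W = 3%N & (U <= wedgeSp W W)%VS].
Proof.
move=> a0E1 b0E1 a1E1 b1E1 a2E1 b2E1 U u_free U_sqr0 dim7.
have [u01 u02 u12] : [/\ wedge (wedge a0 b0) (wedge a1 b1) = 0,
    wedge (wedge a0 b0) (wedge a2 b2) = 0 & wedge (wedge a1 b1) (wedge a2 b2) = 0].
  by split; apply: U_sqr0; apply: memv_span; rewrite !inE eqxx ?orbT.
have [dimP0 dimP1 dimP2] : [/\ \dim <<[:: a0; b0]>> = 2%N, \dim <<[:: a1; b1]>> = 2%N
    & \dim <<[:: a2; b2]>> = 2%N].
  by split; apply: (dim_plane two_neq0) => //; apply: (free_not0 u_free); rewrite !inE eqxx ?orbT.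
have [P2_sub | P2_notsub] := boolP (<<[:: a2; b2]>> <= <<[:: a0; b0]>> + <<[:: a1; b1]>>)%VS.
  set W := (<<[:: a0; b0]>> + <<[:: a1; b1]>>)%VS.
  have planeW a b : (<<[:: a; b]>> <= W)%VS -> a \in W /\ b \in W.
    by move=> /subvP PW; split; apply/PW/memv_span; rewrite !inE eqxx ?orbT.
  have [a0W b0W] := planeW _ _ (addvSl _ _); have [a1W b1W] := planeW _ _ (addvSr _ _).
  have [a2W b2W] := planeW _ _ P2_sub.
  exists W; split; first by rewrite subv_add !plane_subv.
    by apply: (dim_plane_add_eq3 two_neq0) => //; apply: (@catl_free _ _ [:: wedge a2 b2]).
  by apply/span_subvP => x; rewrite !inE => /or3P[] /eqP->; apply: memv_wedgeSp.
have [v v_neq0 [vP0 vP1 vP2]] := planes_common_vector dimP0 dimP1 dimP2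
  (dim_plane_add a0E1 b0E1 a2E1 b2E1 u02) (dim_plane_add a1E1 b1E1 a2E1 b2E1 u12) P2_notsub.
have vE1 : v \in E1 := subvP (plane_subv a0E1 b0E1) _ vP0.
have [c0 c0E1 e0] := wedge_plane_factor two_neq0 a0E1 b0E1 vP0 v_neq0.
have [c1 c1E1 e1] := wedge_plane_factor two_neq0 a1E1 b1E1 vP1 v_neq0.
have [c2 c2E1 e2] := wedge_plane_factor two_neq0 a2E1 b2E1 vP2 v_neq0.
have cE1 : {subset [:: c0; c1; c2] <= E1} by move=> c; rewrite !inE => /or3P[] /eqP->.
move: u_free dim7; rewrite /U e0 e1 e2 => u_free.
by rewrite ltnNge dim_wedgeSp_common_factor.
Qed.

End FiveDimensional.

Theorem lemma5p4 (K : closedFieldType) (hK : (2 \notin [pchar K])%N)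
  (U : {vspace ext K 5})
  (hU2 : (U <= grade K 5 2)%VS) (hdimU : \dim U = 3%N)
  (hUE1 : (7 <= \dim (wedgeSp U (grade K 5 1)))%N) :
  (exists W : {vspace ext K 5},
      [/\ (W <= grade K 5 1)%VS, \dim W = 3%N & (U <= wedgeSp W W)%VS])
  <-> (forall u u', u \in U -> u' \in U -> wedge u u' = 0).
Proof.
have two_neq0 : 2%:R != 0 :> K by apply: contraNneq hK => two0; rewrite inE /= two0 eqxx.
split=> [[W [WE1 dimW UW]] u u' uU u'U | U_sqr0].
  by apply: (wedgeSp_dim3_wedge0 two_neq0 WE1 dimW); apply: (subvP UW).
have [u0 [u1 [u2 [U_span u_free]]]] := dimv3_basis hdimU.
have [u0U u1U u2U] : [/\ u0 \in U, u1 \in U & u2 \in U].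
  by rewrite U_span; split; apply: memv_span; rewrite !inE eqxx ?orbT.
have decomposable u : u \in U ->
    exists a b, [/\ a \in grade K 5 1, b \in grade K 5 1 & u = wedge a b].
  by move=> uU; apply: (grade2_decomposable two_neq0 (subvP hU2 _ uU) (U_sqr0 _ _ uU uU)).
have [a0 [b0 [a0E1 b0E1 e0]]] := decomposable u0 u0U.
have [a1 [b1 [a1E1 b1E1 e1]]] := decomposable u1 u1U.
have [a2 [b2 [a2E1 b2E1 e2]]] := decomposable u2 u2U.
rewrite U_span e0 e1 e2 in hUE1 U_sqr0 u_free *.
by apply: (decomposable_triple_common_space two_neq0 a0E1 b0E1 a1E1 b1E1 a2E1 b2E1 u_free).
Qed.
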